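(* Let $\mathbf{A}$ and $\mathbf{B}$ be two deterministic $k$-tuple and $\ell$-tuple of $N\times N$ matrices and $U$ be a Haar distributed unitary matrix. For any $n$ and any $C_1,\ldots,C_n \in \mathbf{A} \cup U\mathbf{B}U^*$, \begin{enumerate} \item for any $\sigma\in S_n$, if there exist two indices $i\neq j$ in the same cycle of $\sigma$ such that $C_i \in \mathbf{A}$ and $C_j \in U\mathbf{B}U^*$, then $\mathbb{E}[\kappa^N_{\sigma}(C_1,\ldots,C_n)]=0$, \item for any $0\leq m \leq n$, any $\sigma_1\in S_m$, any $\sigma_2\in S_{n-m}$, if $C_i \in \mathbf{A}$ for $i\in \{1,\ldots,m\}$ and $C_{j} \in U\mathbf{B}U^*$, i.e. $C_j = UB^{(c_j)}U^*$ for $j\in \{m+1,\ldots,n\}$, then $$\mathbb{E}[\kappa^{N}_{\sigma_1\otimes \sigma_2}(C_1,\ldots,C_n)]= \kappa^N_{\sigma_1}(C_1,\ldots,C_m)\kappa^N_{\sigma_2}\left(B^{(c_{m+1})},\ldots,B^{(c_{n})}\right).$$ \end{enumerate}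
   Context: The symmetric group $S_n$ acts on $(\mathbb{C}^N)^{\otimes n}$ by $\sigma. v_1\otimes\cdots\otimes v_n = v_{\sigma^{-1}(1)}\otimes\cdots\otimes v_{\sigma^{-1}(n)}$, and $\sigma$ also denotes the corresponding endomorphism. For $\sigma\in S_n$, $|\sigma| = n-\#\sigma$ where $\#\sigma$ is the number of cycles of $\sigma$. For matrices $M_1,\ldots,M_n\in M_N(\mathbb{C})$ and $U$ Haar distributed on the unitary group $U(N)$, the matricial cumulants $(\kappa^N_\sigma(\mathbf{M}))_{\sigma\in S_n}$ of $\mathbf{M}=(M_1,\ldots,M_n)$ are the coefficients such that $\mathbb{E}_U[(UM_1U^* )\otimes\cdots\otimes(UM_nU^* )] = \sum_{\sigma\in S_n} N^{-|\sigma|}\kappa^N_\sigma(\mathbf{M})\,\sigma$ in $\mathrm{End}((\mathbb{C}^N)^{\otimes n})$ (uniquely defined when $N\ge n$). When $M_1,\ldots,M_n$ are random, $\mathbb{E}[\kappa^N_\sigma(\mathbf{M})]$ is defined by $\mathbb{E}[(UM_1U^* )\otimes\cdots\otimes(UM_nU^* )] = \sum_{\sigma\in S_n} N^{-|\sigma|}\mathbb{E}[\kappa^N_\sigma(\mathbf{M})]\,\sigma$ with $U$ Haar distributed and independent of $M_1,\ldots,M_n$. For $\sigma_1\in S_m$, $\sigma_2\in S_{n-m}$, $\sigma_1\otimes\sigma_2\in S_n$ is the permutation with $\sigma_1\otimes\sigma_2(i)=\sigma_1(i)$ for $i\le m$ and $\sigma_1\otimes\sigma_2(m+i)=m+\sigma_2(i)$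 for $1\le i\le n-m$. *)

From HB Require Import structures.
From mathcomp Require Import all_boot all_order all_algebra all_fingroup.
From mathcomp Require Import complex.
From mathcomp Require Import all_classical all_reals all_analysis.

Set Implicit Arguments.
Unset Strict Implicit.
Unset Printing Implicit Defensive.

Import Order.TTheory GRing.Theory Num.Theory.
Import numFieldTopology.Exports numFieldNormedType.Exports.
Local Open Scope ring_scope.

(* The usual (norm) topology on R[i], hence on matrices over R[i]
   (and products of these), used to talk about continuous test functions. *)
HB.instance Definition _ (R : rcfType) := PseudoPointedMetric.copy R[i] (R[i])^o.

Section Defs.
Variable R : realType.
Local Notation C := (R[i]).

Definition adjmx N (M : 'M[C]_N) : 'M[C]_N := (map_mx (@conjc R) M)^T.

Definition unitary N (M : 'M[C]_N) : bool := M *m adjmx M == 1%:M.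

Definition conj_by N (W M : 'M[C]_N) : 'M[C]_N := W *m M *m adjmx W.

(* Endomorphisms of (C^N)^{(x) n} are represented by their matrix entries
   indexed by multi-indices a b : {ffun 'I_n -> 'I_N} (the basis
   e_{a 0} (x) ... (x) e_{a (n-1)}). *)
Definition tensor_mx N n (M : 'I_n -> 'M[C]_N)
    (a b : {ffun 'I_n -> 'I_N}) : C :=
  \prod_(i < n) M i (a i) (b i).

(* The operator of s acting by s.(v_1 (x) .. (x) v_n) =
   v_{s^-1(1)} (x) .. (x) v_{s^-1(n)}: it maps e_b to e_a with a (s k) = b k. *)
Definition perm_op N n (s : 'S_n) (a b : {ffun 'I_n -> 'I_N}) : C :=
  ([forall k, a (s k) == b k])%:R.

Definition perm_len n (s : 'S_n) : nat := (n - #|porbits s|)%N.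

Definition tens_perm_fun m n (s1 : 'S_m) (s2 : 'S_n) (i : 'I_(m + n)) :
    'I_(m + n) :=
  match fintype.split i with
  | inl j => lshift n (s1 j)
  | inr j => rshift m (s2 j)
  end.

Lemma tens_perm_fun_inj m n (s1 : 'S_m) (s2 : 'S_n) :
  injective (tens_perm_fun s1 s2).
Proof.
have E (x : 'I_(m + n)) : tens_perm_fun s1 s2 x = unsplit (match fintype.split x with
   inl j => inl (s1 j) | inr j => inr (s2 j) end).
  by rewrite /tens_perm_fun; case: (fintype.split x).
move=> i j; rewrite !E => /(can_inj unsplitK).
case E1: (fintype.split i) => [a|a]; case E2: (fintype.split j) => [b|b] //= [].
- by move/perm_inj=> eab; apply: (can_inj splitK); rewrite E1 E2 eab.
- by move/perm_inj=> eab; apply: (can_inj splitK); rewrite E1 E2 eab.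
Qed.

Definition tens_perm m n (s1 : 'S_m) (s2 : 'S_n) : 'S_(m + n) :=
  perm (@tens_perm_fun_inj m n s1 s2).

Section Prob.
Context {d : measure_display} {T : measurableType d} (P : probability T R).

Definition Cexpect (f : T -> C) : C :=
  Complex (fine (\int[P]_w (complex.Re (f w))%:E)%E)
          (fine (\int[P]_w (complex.Im (f w))%:E)%E).

Definition random_mx N (X : T -> 'M[C]_N) : Prop :=
  forall i j, measurable_fun setT (fun w => complex.Re (X w i j)) /\
              measurable_fun setT (fun w => complex.Im (X w i j)).

(* (V, U) is Haar distributed on U(N) x U(N), i.e. V and U are independent
   Haar unitaries: (V,U) takes values in U(N) x U(N) and its law is invariant
   under left (and right) multiplication by U(N) x U(N) (tested against all
   continuous functions). *)
Definition haar_pair N (V U : T -> 'M[C]_N) : Prop :=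
  [/\ random_mx V, random_mx U,
      (forall w, unitary (V w) /\ unitary (U w)) &
      forall W1 W2 W3 W4 : 'M[C]_N,
        unitary W1 -> unitary W2 -> unitary W3 -> unitary W4 ->
        forall g : ('M[C]_N * 'M[C]_N)%type -> R, continuous g ->
        (\int[P]_w (g (W1 *m V w *m W2, W3 *m U w *m W4))%:E
         = \int[P]_w (g (V w, U w))%:E)%E ].

(* kap is the family of (expected) matricial cumulants of the (possibly
   random) tuple X = (X_1,..,X_n), computed with the Haar unitary V, which
   is assumed independent of X: for all multi-indices a b,
   E[(V X_1 V^* ) (x) .. (x) (V X_n V^* )]_(a,b)
      = \sum_s N^{-|s|} kap s (s)_(a,b).
   For deterministic X (constant functions) these are the matricial
   cumulants kappa^N_s(X). *)
Definition cumulants_wrt N (V : T -> 'M[C]_N) n (X : 'I_n -> T -> 'M[C]_N)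
    (kap : 'S_n -> C) : Prop :=
  forall a b : {ffun 'I_n -> 'I_N},
    Cexpect (fun w => tensor_mx (fun i => conj_by (V w) (X i w)) a b)
    = \sum_(s : 'S_n) (N%:R^-1) ^+ (perm_len s) * kap s * perm_op s a b.

End Prob.

Definition mixed_tuple N k l n (A : 'I_k -> 'M[C]_N) (B : 'I_l -> 'M[C]_N)
   {T : Type} (U : T -> 'M[C]_N) (c : 'I_n -> ('I_k + 'I_l)%type) :
   'I_n -> T -> 'M[C]_N :=
  fun i w => match c i with
             | inl a => A a
             | inr b => conj_by (U w) (B b)
             end.

Definition is_from_A k l (x : ('I_k + 'I_l)%type) : bool :=
  if x is inl _ then true else false.

End Defs.

From HB Require Import structures.
From mathcomp Require Import all_boot all_order all_algebra all_fingroup.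
From mathcomp Require Import complex.
From mathcomp Require Import all_classical all_reals all_analysis.
From mathcomp Require Import zify.
Set Implicit Arguments.
Unset Strict Implicit.
Unset Printing Implicit Defensive.

Import Order.TTheory GRing.Theory Num.Theory.
Import numFieldTopology.Exports numFieldNormedType.Exports.
Local Open Scope ring_scope.

(* For an injective multi-index a, the (a, a \o s) entry of
   E[(V C_1 V^* ) (x) ... (x) (V C_n V^* )] is N^-|s| times the cumulant of
   index s.  This entry factors as g(V) h(VU), where g collects the
   factors coming from A and h those coming from U B U^*.  Haar invariance
   and Fubini show that V and VU are independent and both Haar distributed,
   so E[g(V) h(VU)] = E[g(V)] E[h(V)].  For s1 (x) s2 the two expectations
   are N^-|s1| kappa(A) and N^-|s2| kappa(B), which gives (2).  If a cycle of
   s mixes the two families, s maps some A-index i0 to a B-index; replacing V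
   by D V, where D flips the sign of the basis vector a (s i0), negates g(V),
   hence E[g(V)] = 0, which gives (1). *)

Local Notation Re := (@complex.Re _).
Local Notation Im := (@complex.Im _).

Section ComplexParts.
Variable R : rcfType.
Implicit Types x y : R[i].
Local Open Scope complex_scope.

Lemma Re_add x y : Re (x + y) = Re x + Re y.
Proof. by case: x => ? ?; case: y => ? ?. Qed.
Lemma Im_add x y : Im (x + y) = Im x + Im y.
Proof. by case: x => ? ?; case: y => ? ?. Qed.
Lemma Re_mul x y : Re (x * y) = Re x * Re y - Im x * Im y.
Proof. by case: x => ? ?; case: y => ? ?. Qed.
Lemma Im_mul x y : Im (x * y) = Re x * Im y + Im x * Re y.
Proof. by case: x => ? ?; case: y => ? ?. Qed.
Lemma Re_conjc x : Re x^*%C = Re x. Proof. by case: x. Qed.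
Lemma Im_conjc x : Im x^*%C = - Im x. Proof. by case: x. Qed.

Lemma complex_eqP x y : Re x = Re y -> Im x = Im y -> x = y.
Proof. by case: x; case: y => ? ? ? ? /= -> ->. Qed.

Lemma normc_ge_Im x : `|Im x|%:C <= `|x|.
Proof.
by case: x => a b; simpc; rewrite -sqrtr_sqr ler_wsqrtr // lerDr sqr_ge0.
Qed.

End ComplexParts.

Section FunSubalgebra.
Variable R : realType.
Local Notation C := R[i].

Record fun_subalgebra (S : Type) (Q : (S -> R) -> Prop) : Prop := FunSubalgebra {
  fun_subalgebra_cst : forall c, Q (fun _ => c);
  fun_subalgebraD : forall f g, Q f -> Q g -> Q (fun s => f s + g s);
  fun_subalgebraM : forall f g, Q f -> Q g -> Q (fun s => f s * g s);
  fun_subalgebraN : forall f, Q f -> Q (fun s => - f s) }.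

Definition cpx_in (S : Type) (Q : (S -> R) -> Prop) (f : S -> C) : Prop :=
  Q (fun s => Re (f s)) /\ Q (fun s => Im (f s)).

Definition mx_in (S : Type) (Q : (S -> R) -> Prop) N (Y : S -> 'M[C]_N) : Prop :=
  forall i j, cpx_in Q (fun s => Y s i j).

Lemma fun_subalgebraI (S : Type) (Q1 Q2 : (S -> R) -> Prop) :
  fun_subalgebra Q1 -> fun_subalgebra Q2 -> fun_subalgebra (fun f => Q1 f /\ Q2 f).
Proof.
case=> c1 D1 M1 N1 [c2 D2 M2 N2]; split.
- by move=> c; split; [exact: c1|exact: c2].
- by move=> f g [? ?] [? ?]; split; [exact: D1|exact: D2].
- by move=> f g [? ?] [? ?]; split; [exact: M1|exact: M2].
- by move=> f [? ?]; split; [exact: N1|exact: N2].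
Qed.

Lemma mx_inI (S : Type) (Q1 Q2 : (S -> R) -> Prop) N (Y : S -> 'M[C]_N) :
  mx_in Q1 Y -> mx_in Q2 Y -> mx_in (fun f => Q1 f /\ Q2 f) Y.
Proof. by move=> Y1 Y2 i j; have [? ?] := Y1 i j; have [? ?] := Y2 i j. Qed.

Section Closure.
Variables (S : Type) (Q : (S -> R) -> Prop).
Hypothesis hQ : fun_subalgebra Q.

Lemma cpx_in_cst c : cpx_in Q (fun _ => c).
Proof. by split; apply: fun_subalgebra_cst hQ _. Qed.

Lemma cpx_inD f g : cpx_in Q f -> cpx_in Q g -> cpx_in Q (fun s => f s + g s).
Proof.
case: hQ => _ QD _ _ [f1 f2] [g1 g2]; split.
  by under boolp.eq_fun do rewrite Re_add; apply: QD.
by under boolp.eq_fun do rewrite Im_add; apply: QD.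
Qed.

Lemma cpx_inM f g : cpx_in Q f -> cpx_in Q g -> cpx_in Q (fun s => f s * g s).
Proof.
case: hQ => _ QD QM QN [f1 f2] [g1 g2]; split.
  by under boolp.eq_fun do rewrite Re_mul; apply: QD; [|apply: QN]; apply: QM.
by under boolp.eq_fun do rewrite Im_mul; apply: QD; apply: QM.
Qed.

Lemma cpx_in_conjc f : cpx_in Q f -> cpx_in Q (fun s => (f s)^*%C).
Proof.
case: hQ => _ _ _ QN [f1 f2]; split.
  by under boolp.eq_fun do rewrite Re_conjc.
by under boolp.eq_fun do rewrite Im_conjc; apply: QN.
Qed.

Lemma cpx_in_sum (I : Type) (r : seq I) (P : pred I) (F : I -> S -> C) :
  (forall i, cpx_in Q (F i)) -> cpx_in Q (fun s => \sum_(i <- r | P i) F i s).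
Proof.
move=> QF; elim: r => [|x r IH].
  by under boolp.eq_fun do rewrite big_nil; apply: cpx_in_cst.
under boolp.eq_fun do rewrite big_cons.
by case: (P x) => //; apply: cpx_inD.
Qed.

Lemma cpx_in_prod (I : Type) (r : seq I) (P : pred I) (F : I -> S -> C) :
  (forall i, cpx_in Q (F i)) -> cpx_in Q (fun s => \prod_(i <- r | P i) F i s).
Proof.
move=> QF; elim: r => [|x r IH].
  by under boolp.eq_fun do rewrite big_nil; apply: cpx_in_cst.
under boolp.eq_fun do rewrite big_cons.
by case: (P x) => //; apply: cpx_inM.
Qed.

Variable N : nat.
Implicit Types Y Z : S -> 'M[C]_N.

Lemma mx_in_cst (M : 'M[C]_N) : mx_in Q (fun _ => M).
Proof. by move=> i j; apply: cpx_in_cst. Qed.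

Lemma mx_inM Y Z : mx_in Q Y -> mx_in Q Z -> mx_in Q (fun s => Y s *m Z s).
Proof.
move=> QY QZ i j; under boolp.eq_fun do rewrite mxE.
by apply: cpx_in_sum => k; apply: cpx_inM.
Qed.

Lemma mx_in_adj Y : mx_in Q Y -> mx_in Q (fun s => adjmx (Y s)).
Proof. by move=> QY i j; under boolp.eq_fun do rewrite !mxE; apply: cpx_in_conjc. Qed.

Lemma mx_in_conj_by Y (K : 'M[C]_N) : mx_in Q Y -> mx_in Q (fun s => conj_by (Y s) K).
Proof. by move=> QY; apply: mx_inM (mx_inM QY (mx_in_cst K)) (mx_in_adj QY). Qed.

End Closure.

(* A syntax-free way to say that g is a polynomial in the real and imaginary
   parts of the entries: measurability, continuity and boundedness of g(Y)
   then all follow from the corresponding property of Y. *)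
Definition entry_poly N (g : 'M[C]_N -> C) : Prop :=
  forall (S : Type) (Q : (S -> R) -> Prop), fun_subalgebra Q ->
  forall Y : S -> 'M[C]_N, mx_in Q Y -> cpx_in Q (fun s => g (Y s)).

Definition norm_bounded (S : Type) (f : S -> R) : Prop :=
  exists K, forall s, `|f s| <= K.

Lemma bounded_subalgebra (S : Type) : fun_subalgebra (@norm_bounded S).
Proof.
split.
- by move=> c; exists `|c|.
- move=> f g [K1 f1] [K2 g2]; exists (K1 + K2) => s.
  exact: le_trans (ler_normD _ _) (lerD (f1 s) (g2 s)).
- move=> f g [K1 f1] [K2 g2]; exists (K1 * K2) => s.
  by rewrite normrM ler_pM.
- by move=> f [K fK]; exists K => s; rewrite normrN.
Qed.

Lemma measurable_subalgebra d (S : measurableType d) :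
  fun_subalgebra (fun f : S -> R => measurable_fun setT f).
Proof.
split.
- by move=> c; apply: measurable_cst.
- by move=> f g mf mg; apply: measurable_realfun.measurable_funD.
- by move=> f g mf mg; apply: measurable_realfun.measurable_funM.
- by move=> f mf; apply: measurableT_comp mf.
Qed.

Lemma continuous_subalgebra (S : topologicalType) :
  fun_subalgebra (fun f : S -> R => continuous f).
Proof.
split.
- by move=> c x; exact: cst_continuous.
- by move=> f g cf cg x; exact: continuousD (cf x) (cg x).
- by move=> f g cf cg x; exact: continuousM (cf x) (cg x).
- by move=> f cf x; exact: continuousN (cf x).
Qed.

End FunSubalgebra.
Arguments bounded_subalgebra {R} S.
Arguments measurable_subalgebra {R d} S.
Arguments continuous_subalgebra {R} S.

Section ComplexContinuity.
Variable R : realType.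
Local Open Scope complex_scope.

Lemma continuous_nonexpansive (f : R[i] -> R) :
  (forall x y : R[i], `|f x - f y|%:C <= `|x - y|) -> continuous f.
Proof.
move=> fK x A /nbhs_ballP [e e0 eA]; apply/nbhs_ballP.
exists e%:C; first by rewrite /= ltcR.
by move=> y xy; apply: eA; rewrite /ball /= -ltcR (le_lt_trans (fK x y)).
Qed.

Lemma continuous_Re : continuous (Re : R[i] -> R).
Proof.
apply: continuous_nonexpansive => x y.
have -> : Re x - Re y = Re (x - y) by case: x => ? ?; case: y => ? ?.
exact: normc_ge_Re.
Qed.

Lemma continuous_Im : continuous (Im : R[i] -> R).
Proof.
apply: continuous_nonexpansive => x y.
have -> : Im x - Im y = Im (x - y) by case: x => ? ?; case: y => ? ?.
exact: normc_ge_Im.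
Qed.

Lemma mx_in_continuous (S : topologicalType) N (Y : S -> 'M[R[i]]_N) :
  continuous Y -> mx_in (fun f : S -> R => continuous f) Y.
Proof.
move=> cY i j; have cYij s : {for s, continuous (fun s => Y s i j)}.
  exact: continuous_comp (cY s) (@coord_continuous _ _ _ i j _).
split=> s; apply: (continuous_comp (cYij s)).
- exact: continuous_Re.
- exact: continuous_Im.
Qed.

End ComplexContinuity.

Section Unitary.
Variables (R : realType) (N : nat).
Implicit Types X Y K : 'M[R[i]]_N.

Lemma adjmxM X Y : adjmx (X *m Y) = adjmx Y *m adjmx X.
Proof. by rewrite /adjmx (map_mxM (@conjc R : {rmorphism _ -> _})) trmx_mul. Qed.

Lemma adjmxK X : adjmx (adjmx X) = X.
Proof. by apply/matrixP => i j; rewrite /adjmx !mxE conjcK. Qed.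

Lemma adjmx1 : adjmx (1%:M : 'M[R[i]]_N) = 1%:M.
Proof. by rewrite /adjmx (map_mx1 (@conjc R : {rmorphism _ -> _})) trmx1. Qed.

Lemma unitary_mulmxV X : unitary X -> X *m adjmx X = 1%:M.
Proof. by move/eqP. Qed.

Lemma unitary_mulVmx X : unitary X -> adjmx X *m X = 1%:M.
Proof. by move/eqP/mulmx1C. Qed.

Lemma unitary1 : unitary (1%:M : 'M[R[i]]_N).
Proof. by rewrite /unitary adjmx1 mulmx1. Qed.

Lemma unitaryM X Y : unitary X -> unitary Y -> unitary (X *m Y).
Proof.
move=> uX uY; apply/eqP.
by rewrite adjmxM mulmxA -(mulmxA X) unitary_mulmxV // mulmx1 unitary_mulmxV.
Qed.

Lemma unitary_adj X : unitary X -> unitary (adjmx X).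
Proof. by move=> uX; apply/eqP; rewrite adjmxK unitary_mulVmx. Qed.

Lemma conj_byM X Y K : conj_by (X *m Y) K = conj_by X (conj_by Y K).
Proof. by rewrite /conj_by adjmxM !mulmxA. Qed.

Lemma unitary_entry_le1 X i j : unitary X -> `|X i j| <= 1.
Proof.
move=> /eqP/matrixP/(_ i i); rewrite !mxE eqxx (bigD1 j) //= => rowN.
rewrite -(@expr_le1 _ 2) // -[leRHS]rowN !mxE -sqr_normc lerDl.
by apply: sumr_ge0 => k _; rewrite !mxE -sqr_normc exprn_ge0.
Qed.

Lemma mx_in_bounded_unitary (S : Type) (Y : S -> 'M[R[i]]_N) :
  (forall s, unitary (Y s)) -> mx_in (@norm_bounded R S) Y.
Proof.
move=> uY i j; have Yij s := unitary_entry_le1 i j (uY s).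
split; exists 1 => s; rewrite -lecR.
- exact: le_trans (normc_ge_Re _) (Yij s).
- exact: le_trans (normc_ge_Im _) (Yij s).
Qed.

End Unitary.
Arguments unitary1 {R N}.

Definition bounded_measurable (R : realType) d (S : measurableType d) (f : S -> R) :
  Prop := measurable_fun setT f /\ norm_bounded f.
Arguments bounded_measurable {R d S}.

Lemma bounded_measurable_subalgebra (R : realType) d (S : measurableType d) :
  fun_subalgebra (@bounded_measurable R d S).
Proof. exact: fun_subalgebraI (measurable_subalgebra S) (bounded_subalgebra S). Qed.

Section RandomUnitary.
Variables (R : realType) (N : nat).
Local Notation M := 'M[R[i]]_N.

Definition random_unitary d (S : measurableType d) (Y : S -> M) : Prop :=
  random_mx Y /\ forall s, unitary (Y s).

Lemma random_unitary_cst d (S : measurableType d) (W : M) :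
  unitary W -> random_unitary (fun _ : S => W).
Proof. by move=> uW; split=> // i j; apply: (mx_in_cst (measurable_subalgebra S)). Qed.

Lemma random_unitaryM d (S : measurableType d) (Y Z : S -> M) :
  random_unitary Y -> random_unitary Z -> random_unitary (fun s => Y s *m Z s).
Proof.
move=> [mY uY] [mZ uZ]; split=> [|s]; last exact: unitaryM.
exact: (mx_inM (measurable_subalgebra S) mY mZ).
Qed.

Lemma random_unitary_comp d d' (S : measurableType d) (S' : measurableType d')
    (h : S' -> S) (Y : S -> M) :
  measurable_fun setT h -> random_unitary Y -> random_unitary (fun s => Y (h s)).
Proof.
move=> mh [mY uY]; split=> // i j.
have [mRe mIm] := mY i j.
by split; [exact: measurableT_comp mRe mh | exact: measurableT_comp mIm mh].
Qed.

Lemma entry_poly_bounded_measurable d (S : measurableType d) (g : M -> R[i])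
    (Y : S -> M) :
  entry_poly g -> random_unitary Y -> cpx_in bounded_measurable (fun s => g (Y s)).
Proof.
move=> pg [mY uY]; apply: pg; first exact: bounded_measurable_subalgebra.
exact: mx_inI mY (mx_in_bounded_unitary uY).
Qed.

End RandomUnitary.

Section Expectation.
Variable R : realType.
Local Notation C := R[i].

Lemma bounded_measurable_integrable d (S : measurableType d) (mu : probability S R)
    (f : S -> R) :
  bounded_measurable f -> mu.-integrable setT (EFin \o f).
Proof.
move=> [mf [K fK]]; apply: measurable_bounded_integrable => //.
  by rewrite -[(_ < _)%E]/(mu setT < +oo)%E probability_setT ltry.
exists K; split; first exact: num_real.
by move=> x Kx s _; apply: le_trans (fK s) (ltW Kx).
Qed.

Lemma bounded_measurable_RintegralE d (S : measurableType d) (mu : probability S R)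
    (f : S -> R) :
  bounded_measurable f -> (\int[mu]_(x in setT) f x)%:E = (\int[mu]_x (f x)%:E)%E.
Proof.
move=> bf; rewrite fineK //; apply: integrable_fin_num => //.
exact: bounded_measurable_integrable.
Qed.

Lemma bounded_measurable_Fubini d (S : measurableType d) (mu : probability S R)
    (f : S * S -> R) :
  bounded_measurable f ->
  \int[mu]_(x in setT) \int[mu]_(y in setT) f (x, y) =
  \int[mu]_(y in setT) \int[mu]_(x in setT) f (x, y).
Proof.
move=> bf; have [mf [K fK]] := bf.
have bf1 y : bounded_measurable (fun x => f (x, y)).
  by split; [exact: measurable_fun_pair1 | exists K].
have bf2 x : bounded_measurable (fun y => f (x, y)).
  by split; [exact: measurable_fun_pair2 | exists K].
rewrite /Rintegral; congr fine.
under eq_integral do rewrite bounded_measurable_RintegralE //.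
under [RHS]eq_integral do rewrite bounded_measurable_RintegralE //.
exact: Fubini (bounded_measurable_integrable (mu \x mu)%E bf).
Qed.

Variables (d : measure_display) (T : measurableType d) (P : probability T R).

Lemma Rintegral_probability_cst (c : R) : \int[P]_(w in setT) c = c.
Proof.
by rewrite Rintegral_cst // -[fine _]/(fine (P setT)) probability_setT mulr1.
Qed.

Lemma Cexpect_cst (c : C) : Cexpect P (fun _ => c) = c.
Proof. by apply: complex_eqP; apply: Rintegral_probability_cst. Qed.

Lemma Cexpect_mulr (f : T -> C) (c : C) :
  cpx_in bounded_measurable f ->
  Cexpect P (fun w => f w * c) = Cexpect P f * c.
Proof.
move=> [bRe bIm].
have hQ := bounded_measurable_subalgebra R T.
have iZ g r : bounded_measurable g ->
    P.-integrable setT (EFin \o (fun w => g w * r)).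
  move=> bg; apply: bounded_measurable_integrable.
  exact: fun_subalgebraM hQ _ _ bg (fun_subalgebra_cst hQ r).
apply: complex_eqP; [rewrite Re_mul | rewrite Im_mul];
  rewrite /= -![fine _]/(Rintegral P setT _).
- under eq_Rintegral do rewrite Re_mul.
  by rewrite RintegralB ?iZ // !RintegralZr ?bounded_measurable_integrable.
- under eq_Rintegral do rewrite Im_mul.
  by rewrite RintegralD ?iZ // !RintegralZr ?bounded_measurable_integrable.
Qed.

Lemma Cexpect_mull (f : T -> C) (c : C) :
  cpx_in bounded_measurable f ->
  Cexpect P (fun w => c * f w) = c * Cexpect P f.
Proof.
move=> bf; rewrite mulrC -Cexpect_mulr //.
by congr Cexpect; apply: boolp.funext => w; rewrite mulrC.
Qed.

Lemma Cexpect_Fubini (Phi : T -> T -> C) :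
  cpx_in bounded_measurable (fun z => Phi z.1 z.2) ->
  Cexpect P (fun x => Cexpect P (Phi x)) =
  Cexpect P (fun y => Cexpect P (fun x => Phi x y)).
Proof.
move=> [bRe bIm]; apply: complex_eqP.
- exact: (bounded_measurable_Fubini P bRe).
- exact: (bounded_measurable_Fubini P bIm).
Qed.

End Expectation.

Section HaarPair.
Variables (R : realType) (d : measure_display) (T : measurableType d).
Variables (P : probability T R) (N : nat) (V U : T -> 'M[R[i]]_N).
Hypothesis hVU : haar_pair P V U.
Local Notation C := R[i].
Local Notation M := 'M[C]_N.
Local Notation E := (Cexpect P).

Let rV : random_unitary V.
Proof. by case: hVU => mV _ uVU _; split=> // w; case: (uVU w). Qed.
Let rU : random_unitary U.
Proof. by case: hVU => _ mU uVU _; split=> // w; case: (uVU w). Qed.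
Let uV w : unitary (V w). Proof. by case: rV. Qed.
Let uU w : unitary (U w). Proof. by case: rU. Qed.

Let rV1 : random_unitary (fun z : T * T => V z.1).
Proof. exact: random_unitary_comp measurable_fst rV. Qed.
Let rV2 : random_unitary (fun z : T * T => V z.2).
Proof. exact: random_unitary_comp measurable_snd rV. Qed.
Let rU2 : random_unitary (fun z : T * T => U z.2).
Proof. exact: random_unitary_comp measurable_snd rU. Qed.

Let cfst : mx_in (fun f : M * M -> R => continuous f) (fun p => p.1).
Proof. by apply: mx_in_continuous => p; exact: cvg_fst. Qed.
Let csnd : mx_in (fun f : M * M -> R => continuous f) (fun p => p.2).
Proof. by apply: mx_in_continuous => p; exact: cvg_snd. Qed.
Let cmul : mx_in (fun f : M * M -> R => continuous f) (fun p => p.1 *m p.2).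
Proof. exact: (mx_inM (continuous_subalgebra _) cfst csnd). Qed.

Lemma Cexpect_haar (W1 W2 W3 W4 : M) (Phi : M -> M -> C) :
  unitary W1 -> unitary W2 -> unitary W3 -> unitary W4 ->
  cpx_in (fun f : M * M -> R => continuous f) (fun p => Phi p.1 p.2) ->
  E (fun w => Phi (W1 *m V w *m W2) (W3 *m U w *m W4)) = E (fun w => Phi (V w) (U w)).
Proof.
case: hVU => _ _ _ inv u1 u2 u3 u4 [cRe cIm].
by congr Complex; congr fine; [exact: (inv _ _ _ _ u1 u2 u3 u4 _ cRe) |
  exact: (inv _ _ _ _ u1 u2 u3 u4 _ cIm)].
Qed.

Lemma Cexpect_haar_mull (g : M -> C) (W : M) :
  entry_poly g -> unitary W -> E (fun w => g (W *m V w)) = E (fun w => g (V w)).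
Proof.
move=> pg uW.
have := Cexpect_haar (Phi := fun x _ => g x) uW unitary1 unitary1 unitary1.
move=> /(_ (pg _ _ (continuous_subalgebra _) _ cfst)) <-.
by congr E; apply: boolp.funext => w; rewrite mulmx1.
Qed.

(* U V(w1) has the law of U; after exchanging the integrals, V(w2) U(w2) V
   has the law of V. *)
Lemma Cexpect_VU (h : M -> C) :
  entry_poly h -> E (fun w => h (V w *m U w)) = E (fun w => h (V w)).
Proof.
move=> ph; set I := LHS.
have shift w1 : E (fun w2 => h (V w2 *m U w2 *m V w1)) = I.
  rewrite /I; have := Cexpect_haar (Phi := fun x y => h (x *m y))
    unitary1 unitary1 unitary1 (uV w1).
  move=> /(_ (ph _ _ (continuous_subalgebra _) _ cmul)) <-.
  by congr E; apply: boolp.funext => w; rewrite !mul1mx mulmx1 mulmxA.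
transitivity (E (fun w1 => E (fun w2 => h (V w2 *m U w2 *m V w1)))).
  by rewrite -{1}(Cexpect_cst P I); congr E; apply: boolp.funext => w1; rewrite shift.
rewrite Cexpect_Fubini; last first.
  exact: entry_poly_bounded_measurable ph (random_unitaryM (random_unitaryM rV2 rU2) rV1).
under eq_fun do rewrite (Cexpect_haar_mull ph (unitaryM (uV _) (uU _))).
exact: Cexpect_cst.
Qed.

(* For fixed w1, (V V(w1), V(w1)^* U) has the law of (V, U); averaging over
   w1 and exchanging the integrals separates the two factors. *)
Lemma Cexpect_indep_V_VU (g h : M -> C) : entry_poly g -> entry_poly h ->
  E (fun w => g (V w) * h (V w *m U w)) =
  E (fun w => g (V w)) * E (fun w => h (V w *m U w)).
Proof.
move=> pg ph; set I := LHS.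
have cg := pg _ _ (continuous_subalgebra _) _ cfst.
have ch := ph _ _ (continuous_subalgebra _) _ cmul.
have shift w1 : E (fun w2 => g (V w2 *m V w1) * h (V w2 *m U w2)) = I.
  rewrite /I; have := Cexpect_haar (Phi := fun x y => g x * h (x *m y))
    unitary1 (uV w1) (unitary_adj (uV w1)) unitary1.
  move=> /(_ (cpx_inM (continuous_subalgebra _) cg ch)) <-.
  congr E; apply: boolp.funext => w.
  by rewrite mul1mx !mulmx1 !mulmxA -(mulmxA (V w)) unitary_mulmxV // mulmx1.
have inner w2 : E (fun w1 => g (V w2 *m V w1) * h (V w2 *m U w2)) =
                E (fun w => g (V w)) * h (V w2 *m U w2).
  rewrite Cexpect_mulr ?(Cexpect_haar_mull pg (uV w2)) //.
  apply: entry_poly_bounded_measurable pg _.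
  exact: random_unitaryM (random_unitary_cst _ (uV w2)) rV.
transitivity (E (fun w1 => E (fun w2 => g (V w2 *m V w1) * h (V w2 *m U w2)))).
  by rewrite -{1}(Cexpect_cst P I); congr E; apply: boolp.funext => w1; rewrite shift.
rewrite Cexpect_Fubini; last first.
  apply: (cpx_inM (bounded_measurable_subalgebra _ _)).
  - exact: entry_poly_bounded_measurable pg (random_unitaryM rV2 rV1).
  - exact: entry_poly_bounded_measurable ph (random_unitaryM rV2 rU2).
under eq_fun do rewrite inner.
rewrite Cexpect_mull //.
exact: entry_poly_bounded_measurable ph (random_unitaryM rV rU).
Qed.

Lemma Cexpect_mul_V_VU (g h : M -> C) : entry_poly g -> entry_poly h ->
  E (fun w => g (V w) * h (V w *m U w)) = E (fun w => g (V w)) * E (fun w => h (V w)).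
Proof. by move=> pg ph; rewrite Cexpect_indep_V_VU // Cexpect_VU. Qed.

Lemma Cexpect_odd (g : M -> C) (D : M) : entry_poly g -> unitary D ->
  (forall Y, g (D *m Y) = - g Y) -> E (fun w => g (V w)) = 0.
Proof.
move=> pg uD gD; have := Cexpect_haar_mull pg uD.
under eq_fun do rewrite gD -mulrN1.
rewrite Cexpect_mulr; last exact: entry_poly_bounded_measurable pg rV.
move/eqP; rewrite mulrN1 eq_sym -subr_eq0 opprK -mulr2n mulrn_eq0 /=.
by move/eqP.
Qed.

End HaarPair.

Section TensorPerm.
Variables (m n : nat) (s1 : 'S_m) (s2 : 'S_n).
Local Notation t := (tens_perm s1 s2).

Lemma tens_perm_lshift j : t (lshift n j) = lshift n (s1 j).
Proof. by rewrite permE /tens_perm_fun (unsplitK (inl _ j)). Qed.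

Lemma tens_perm_rshift j : t (rshift m j) = rshift m (s2 j).
Proof. by rewrite permE /tens_perm_fun (unsplitK (inr _ j)). Qed.

Lemma porbit_tens_perm_lshift j : porbit t (lshift n j) = lshift n @: porbit s1 j.
Proof.
have tX e : (t ^+ e)%g (lshift n j) = lshift n ((s1 ^+ e)%g j).
  by elim: e => [|e IH]; rewrite ?expg0 ?perm1 // !expgSr !permM IH tens_perm_lshift.
apply/setP => y; apply/porbitP/imsetP => [[e ->]|[x /porbitP[e ->] ->]].
  by exists ((s1 ^+ e)%g j); [exact: mem_porbit | exact: tX].
by exists e; rewrite tX.
Qed.

Lemma porbit_tens_perm_rshift j : porbit t (rshift m j) = @rshift m n @: porbit s2 j.
Proof.
have tX e : (t ^+ e)%g (rshift m j) = rshift m ((s2 ^+ e)%g j).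
  by elim: e => [|e IH]; rewrite ?expg0 ?perm1 // !expgSr !permM IH tens_perm_rshift.
apply/setP => y; apply/porbitP/imsetP => [[e ->]|[x /porbitP[e ->] ->]].
  by exists ((s2 ^+ e)%g j); [exact: mem_porbit | exact: tX].
by exists e; rewrite tX.
Qed.

Lemma porbits_tens_perm :
  porbits t = [set lshift n @: A | A : {set 'I_m} in porbits s1] :|:
              [set @rshift m n @: A | A : {set 'I_n} in porbits s2].
Proof.
apply/setP => Z; apply/imsetP/setUP => [[y _ ->]|].
  rewrite -(splitK y); case: (fintype.split y) => j /=.
  - by left; rewrite porbit_tens_perm_lshift; apply/imset_f/imset_f.
  - by right; rewrite porbit_tens_perm_rshift; apply/imset_f/imset_f.
by case=> /imsetP[A /imsetP[j _ ->] ->];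
  [exists (lshift n j); rewrite ?porbit_tens_perm_lshift |
   exists (rshift m j); rewrite ?porbit_tens_perm_rshift].
Qed.

Lemma card_porbits_tens_perm : #|porbits t| = (#|porbits s1| + #|porbits s2|)%N.
Proof.
rewrite porbits_tens_perm cardsU (card_imset _ (imset_inj (@lshift_inj m n))).
rewrite (card_imset _ (imset_inj (@rshift_inj m n))) -[RHS]subn0; congr (_ - _)%N.
apply/eqP; rewrite cards_eq0; apply/eqP/setP => Z; rewrite !inE.
apply/negbTE/andP => [[/imsetP[A /imsetP[i _ ->] ->] /imsetP[B /imsetP[j _ ->]]]].
move=> /setP/(_ (lshift n i)); rewrite imset_f ?porbit_id //.
by move=> /esym/imsetP[x _ /eqP]; rewrite eq_lrshift.
Qed.

End TensorPerm.

Lemma card_porbits_le n (s : 'S_n) : (#|porbits s| <= n)%N.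
Proof. by rewrite -[n in (_ <= n)%N]card_ord leq_imset_card. Qed.

Lemma perm_len_tens m n (s1 : 'S_m) (s2 : 'S_n) :
  perm_len (tens_perm s1 s2) = (perm_len s1 + perm_len s2)%N.
Proof.
rewrite /perm_len card_porbits_tens_perm.
have := card_porbits_le s1; have := card_porbits_le s2; lia.
Qed.

Lemma exp_inv_natr_perm_len_neq0 (F : numFieldType) n N (s : 'S_n) :
  (n <= N)%N -> (N%:R^-1 : F) ^+ perm_len s != 0.
Proof.
(* For N = 0 the base is 0^-1 = 0, but then perm_len s = 0. *)
case: N => [|N] nN; last by rewrite expf_neq0 // invr_eq0 pnatr_eq0.
suff -> : perm_len s = 0%N by rewrite expr0 oner_neq0.
by apply/eqP; rewrite -leqn0 (leq_trans (leq_subr _ _) nN).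
Qed.

Lemma porbit_exit (X : finType) (s : {perm X}) (p : pred X) x y :
  y \in porbit s x -> p x -> ~~ p y -> exists2 z, p z & ~~ p (s z).
Proof.
move=> /porbitP[e ->] px; elim: e => [|e IH]; first by rewrite expg0 perm1 px.
rewrite expgSr permM => npe.
by have [pe|/IH] := boolP (p ((s ^+ e)%g x)); first by exists ((s ^+ e)%g x).
Qed.

Section ConjProd.
Variables (R : realType) (N : nat).
Local Notation C := R[i].
Local Notation M := 'M[C]_N.

Definition conj_prod n (p : pred 'I_n) (K : 'I_n -> M) (a b : 'I_n -> 'I_N) (Y : M) : C :=
  \prod_(i < n | p i) conj_by Y (K i) (a i) (b i).

Lemma entry_poly_conj_prod n (p : pred 'I_n) K a b : entry_poly (conj_prod p K a b).
Proof.
move=> S Q hQ Y QY.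
by apply: (cpx_in_prod hQ) => i; apply: mx_in_conj_by.
Qed.

Lemma perm_op_inj n (a : {ffun 'I_n -> 'I_N}) (s s' : 'S_n) :
  injective a -> @perm_op R _ _ s' a [ffun k => a (s k)] = (s' == s)%:R.
Proof.
move=> ia; congr (nat_of_bool _)%:R.
apply/forallP/eqP => [eq_as|->] => [|k]; last by rewrite ffunE.
by apply/permP => k; apply: ia; have /eqP := eq_as k; rewrite ffunE.
Qed.

Definition flip_sign (x0 p : 'I_N) : C := if p == x0 then -1 else 1.

Definition sign_flip (x0 : 'I_N) : M := diag_mx (\row_p flip_sign x0 p).

Lemma adjmx_sign_flip x0 : adjmx (sign_flip x0) = sign_flip x0.
Proof.
apply/matrixP => p q; rewrite /adjmx !mxE.
have [<-|_] := eqVneq p q; last by rewrite !mulr0n conjc0.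
rewrite !mulr1n /flip_sign; case: (p == x0); last exact: conjc1.
exact: (rmorphN1 (conjc : {rmorphism C -> C})).
Qed.

Lemma unitary_sign_flip x0 : unitary (sign_flip x0).
Proof.
apply/eqP; rewrite adjmx_sign_flip mulmx_diag -diag_const_mx; congr diag_mx.
by apply/matrixP => i j; rewrite !mxE /flip_sign; case: (j == x0); rewrite ?mulrNN mulr1.
Qed.

Lemma conj_by_sign_flip x0 (Y K : M) p q :
  conj_by (sign_flip x0 *m Y) K p q = flip_sign x0 p * flip_sign x0 q * conj_by Y K p q.
Proof.
rewrite conj_byM {1}/conj_by adjmx_sign_flip mul_mx_diag mxE mul_diag_mx !mxE.
by rewrite mulrAC.
Qed.

Lemma conj_prod_sign_flip n (p : pred 'I_n) K (a b : 'I_n -> 'I_N) (s : 'S_n) i0 Y :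
  injective a -> (forall k, b k = a (s k)) -> p i0 -> ~~ p (s i0) ->
  conj_prod p K a b (sign_flip (a (s i0)) *m Y) = - conj_prod p K a b Y.
Proof.
move=> ia bE pi0 npsi0.
have sa : \prod_(x < n | p x) flip_sign (a (s i0)) (a x) = 1.
  apply: big1 => x px; rewrite /flip_sign; case: eqP => // /ia xE.
  by move: npsi0; rewrite -xE px.
have sb : \prod_(x < n | p x) flip_sign (a (s i0)) (b x) = -1.
  rewrite (bigD1 i0) //= big1 ?mulr1 => [|x /andP[_ xi0]].
    by rewrite /flip_sign bE eqxx.
  by rewrite /flip_sign bE; case: eqP => // /ia/perm_inj xE; rewrite xE eqxx in xi0.
rewrite /conj_prod; under eq_bigr do rewrite conj_by_sign_flip.
by rewrite !big_split /= sa sb mul1r mulN1r.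
Qed.

End ConjProd.

Section Tensor.
Variables (R : realType) (N : nat).
Local Notation M := 'M[R[i]]_N.

Lemma tensor_mx_split m n (K : 'I_(m + n) -> M) (a b : {ffun 'I_(m + n) -> 'I_N}) :
  tensor_mx K a b =
  tensor_mx (fun j => K (lshift n j))
    [ffun j => a (lshift n j)] [ffun j => b (lshift n j)] *
  tensor_mx (fun j => K (rshift m j))
    [ffun j => a (rshift m j)] [ffun j => b (rshift m j)].
Proof.
by rewrite /tensor_mx big_split_ord; congr (_ * _); apply: eq_bigr => j _; rewrite !ffunE.
Qed.

Variables (k l : nat) (A : 'I_k -> M) (B : 'I_l -> M).

Definition mixed_base n (c : 'I_n -> ('I_k + 'I_l)%type) (i : 'I_n) : M :=
  match c i with inl x => A x | inr y => B y end.

Lemma tensor_mixed_tuple (T : Type) (U : T -> M) n (c : 'I_n -> ('I_k + 'I_l)%type)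
    (a b : {ffun 'I_n -> 'I_N}) (Y : M) w :
  tensor_mx (fun i => conj_by Y (mixed_tuple A B U c i w)) a b =
  conj_prod (fun i => is_from_A (c i)) (mixed_base c) a b Y *
  conj_prod (fun i => ~~ is_from_A (c i)) (mixed_base c) a b (Y *m U w).
Proof.
rewrite /tensor_mx (bigID (fun i => is_from_A (c i))) /=.
by congr (_ * _); apply: eq_bigr => i; rewrite /mixed_tuple /mixed_base;
  case: (c i) => //= y _; rewrite conj_byM.
Qed.

Lemma tensor_split_tuple (T : Type) (U : T -> M) m n (ca : 'I_m -> 'I_k)
    (cb : 'I_n -> 'I_l) (a b : {ffun 'I_(m + n) -> 'I_N}) (Y : M) w :
  tensor_mx (fun i => conj_by Y (mixed_tuple A B U
      (fun i : 'I_(m + n) => match fintype.split i with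
                             | inl j => inl (ca j)
                             | inr j => inr (cb j)
                             end) i w)) a b =
  tensor_mx (fun j => conj_by Y (A (ca j)))
    [ffun j => a (lshift n j)] [ffun j => b (lshift n j)] *
  tensor_mx (fun j => conj_by (Y *m U w) (B (cb j)))
    [ffun j => a (rshift m j)] [ffun j => b (rshift m j)].
Proof.
rewrite tensor_mx_split /mixed_tuple.
by congr (_ * _); congr tensor_mx; apply: boolp.funext => j;
  rewrite ?(unsplitK (inl _ j)) ?(unsplitK (inr _ j)) ?conj_byM.
Qed.

End Tensor.

Section CumulantEntries.
Variables (R : realType) (d : measure_display) (T : measurableType d).
Variables (P : probability T R) (N : nat) (V : T -> 'M[R[i]]_N).

Lemma cumulants_wrt_entry n (X : 'I_n -> T -> 'M[R[i]]_N) kap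
    (a b : {ffun 'I_n -> 'I_N}) (s : 'S_n) :
  cumulants_wrt P V X kap -> injective a -> (forall k, b k = a (s k)) ->
  Cexpect P (fun w => tensor_mx (fun i => conj_by (V w) (X i w)) a b) =
  N%:R^-1 ^+ perm_len s * kap s.
Proof.
move=> hX ia bE; have -> : b = [ffun k => a (s k)] by apply/ffunP => k; rewrite ffunE.
rewrite hX; under eq_bigr do rewrite perm_op_inj // mulr_natr mulrb.
by rewrite -big_mkcond big_pred1_eq.
Qed.

End CumulantEntries.

Definition widen_index n N (nN : (n <= N)%N) : {ffun 'I_n -> 'I_N} :=
  [ffun i => widen_ord nN i].

Lemma widen_index_inj n N (nN : (n <= N)%N) : injective (widen_index nN).
Proof. by move=> i j; rewrite !ffunE => /(congr1 val) /= /val_inj. Qed.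
Arguments widen_index_inj {n N} nN.

Section MixedCumulants.
Variables (R : realType) (d : measure_display) (T : measurableType d).
Variables (P : probability T R) (N k l : nat).
Variables (A : 'I_k -> 'M[R[i]]_N) (B : 'I_l -> 'M[R[i]]_N) (V U : T -> 'M[R[i]]_N).
Hypothesis hVU : haar_pair P V U.

Lemma mixed_cumulant_eq0 n (c : 'I_n -> ('I_k + 'I_l)%type) (Ekap : 'S_n -> R[i])
    (s : 'S_n) (i j : 'I_n) :
  (n <= N)%N -> cumulants_wrt P V (mixed_tuple A B U c) Ekap ->
  i \in porbit s j -> is_from_A (c i) -> ~~ is_from_A (c j) -> Ekap s = 0.
Proof.
move=> nN hE ij Ai Bj; pose a := widen_index nN; pose b := [ffun x => a (s x)].
have bE x : b x = a (s x) by rewrite ffunE.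
rewrite porbit_sym in ij.
have [i0 Ai0 Bsi0] := porbit_exit (p := fun x => is_from_A (c x)) ij Ai Bj.
have pA := entry_poly_conj_prod (fun x => is_from_A (c x)) (mixed_base A B c) a b.
have pB := entry_poly_conj_prod (fun x => ~~ is_from_A (c x)) (mixed_base A B c) a b.
have := cumulants_wrt_entry hE (widen_index_inj nN) bE.
under eq_fun do rewrite tensor_mixed_tuple.
rewrite (Cexpect_mul_V_VU hVU pA pB).
(* Exactly one factor of the A-part, the one at i0, has a (s i0) as an index. *)
rewrite (Cexpect_odd hVU pA (unitary_sign_flip _ (a (s i0)))).
  rewrite mul0r => /esym/eqP.
  by rewrite mulf_eq0 (negbTE (exp_inv_natr_perm_len_neq0 _ s nN)) => /eqP.
by move=> Y; apply: conj_prod_sign_flip (widen_index_inj nN) bE Ai0 Bsi0.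
Qed.

Lemma tens_perm_cumulant m n (ca : 'I_m -> 'I_k) (cb : 'I_n -> 'I_l)
    (s1 : 'S_m) (s2 : 'S_n) :
  (m + n <= N)%N ->
  forall (Ekap : 'S_(m + n) -> R[i]) (kapA : 'S_m -> R[i]) (kapB : 'S_n -> R[i]),
    cumulants_wrt P V
      (mixed_tuple A B U
         (fun i : 'I_(m + n) => match fintype.split i with
                                | inl j => inl (ca j)
                                | inr j => inr (cb j)
                                end)) Ekap ->
    cumulants_wrt P V (fun i (_ : T) => A (ca i)) kapA ->
    cumulants_wrt P V (fun i (_ : T) => B (cb i)) kapB ->
    Ekap (tens_perm s1 s2) = kapA s1 * kapB s2.
Proof.
move=> mnN Ekap kapA kapB hE hA hB; pose t := tens_perm s1 s2.
pose a := widen_index mnN; pose b := [ffun x => a (t x)].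
have ia := widen_index_inj mnN.
have iaL : injective [ffun j => a (lshift n j)].
  by move=> i j; rewrite !ffunE => /(congr1 val) /= /val_inj.
have iaR : injective [ffun j => a (rshift m j)].
  by move=> i j; rewrite !ffunE => /(congr1 val) /= /addnI /val_inj.
have bL j : [ffun j => b (lshift n j)] j = [ffun j => a (lshift n j)] (s1 j).
  by rewrite !ffunE tens_perm_lshift.
have bR j : [ffun j => b (rshift m j)] j = [ffun j => a (rshift m j)] (s2 j).
  by rewrite !ffunE tens_perm_rshift.
have bE x : b x = a (t x) by rewrite ffunE.
have := cumulants_wrt_entry hE ia bE.
under eq_fun do rewrite tensor_split_tuple.
rewrite (Cexpect_mul_V_VU hVU (entry_poly_conj_prod xpredT _ _ _)
                              (entry_poly_conj_prod xpredT _ _ _)).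
rewrite (cumulants_wrt_entry hA iaL bL) (cumulants_wrt_entry hB iaR bR).
rewrite perm_len_tens exprD mulrACA => /(mulfI _)-> //.
by rewrite -exprD -perm_len_tens (exp_inv_natr_perm_len_neq0 _ t mnN).
Qed.

End MixedCumulants.

Theorem theorem5p4 (R : realType) (d : measure_display) (T : measurableType d)
    (P : probability T R) (N k l : nat)
    (A : 'I_k -> 'M[R[i]]_N) (B : 'I_l -> 'M[R[i]]_N)
    (V U : T -> 'M[R[i]]_N) :
  haar_pair P V U ->
  (* (1) *)
  (forall (n : nat) (c : 'I_n -> ('I_k + 'I_l)%type), (n <= N)%N ->
     forall Ekap : 'S_n -> R[i],
       cumulants_wrt P V (mixed_tuple A B U c) Ekap ->
       forall s : 'S_n,
         (exists i j : 'I_n, [/\ i != j, i \in porbit s j,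
                                 is_from_A (c i) & ~~ is_from_A (c j)]) ->
         Ekap s = 0)
  /\
  (* (2) *)
  (forall (m n : nat) (ca : 'I_m -> 'I_k) (cb : 'I_n -> 'I_l)
          (s1 : 'S_m) (s2 : 'S_n), (m + n <= N)%N ->
     forall (Ekap : 'S_(m + n) -> R[i]) (kapA : 'S_m -> R[i])
            (kapB : 'S_n -> R[i]),
       cumulants_wrt P V
         (mixed_tuple A B U
            (fun i : 'I_(m + n) => match fintype.split i with
                                   | inl j => inl (ca j)
                                   | inr j => inr (cb j)
                                   end)) Ekap ->
       cumulants_wrt P V (fun i (_ : T) => A (ca i)) kapA ->
       cumulants_wrt P V (fun i (_ : T) => B (cb i)) kapB ->
       Ekap (tens_perm s1 s2) = kapA s1 * kapB s2).
Proof.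
move=> hVU; split.
- move=> n c nN Ekap hE s [i [j [_ ij Ai Bj]]].
  exact: (mixed_cumulant_eq0 hVU nN hE ij Ai Bj).
- exact: tens_perm_cumulant hVU.
Qed.
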